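(* Assume the setting below, and assume moreover that $Q$ is finite. Let $(\alpha,\beta)\in\mathcal{S}^2$ be shrinking and let $\gamma\in\Gamma_1^{\alpha,\beta}$. Then for all sufficiently large $k\in\mathbb{N}$ there is some $m\in\mathbb{N}$ such that $\gamma^m$ fixes every vertex of level $k$ of $\mathcal{T}_1$ and $\gamma^m|_v\in\tilde G^\beta_{[k+1]}$ for all vertices $v$ of level $k$ in $\mathcal{T}_1$.
   Context: Setting: $Q,G$ are groups and $X=(X_n)_{n\in\mathbb{N}}$ is a sequence of finite sets with $|X_n|\ge2$, each with actions of $Q$ and $G$; $Q_n,G_n\subseteq\mathrm{Sym}(X_n)$ are the images and $A_n=\langle Q_n,G_n\rangle$. Assume for all $n$: (A1) $G,Q$ finitely generated; (A2) $Q$ perfect; (A3) $A_n$ is transitive on $X_n$ and generated by the $G_n$-conjugates of $Q_n$. $\mathcal{T}_j$ is the rooted tree of finite words $x_j\cdots x_k$ ($x_i\in X_i$), $\mathrm{Aut}(\mathcal{T}_j)$ its root-fixing automorphisms; sections $h|_u\in\mathrm{Aut}(\mathcal{T}_{j+\ell})$ (for $u$ of level $\ell$) are defined by $h(uv)=h(u)h|_u(v)$. $A_j$ acts by rooted automorphisms $a\cdot x_jx_{j+1}\cdots x_k=(ax_j)x_{j+1}\cdots x_k$ and is identified with its image; $q_j,g_j$ denote images of $q\in Q,g\in G$ in $A_j$. A point $o\in X_i$ is fixed in each $X_i$; $\mathcal{S}=\prod_{i\ge1}(X_i\setminus\{o\})$. For $\alpha\in\mathcal{S}$, $q\in Q$,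 $\tilde q^\alpha_{[j]}\in\mathrm{Aut}(\mathcal{T}_j)$ acts trivially on the first level with section at $x\in X_j$ equal to $\tilde q^\alpha_{[j+1]}$ if $x=o$, $q_{j+1}$ if $x=\alpha_j$, identity otherwise; analogously $\tilde g^\beta_{[j]}$ for $\beta\in\mathcal{S}$, $g\in G$. $\tilde Q^\alpha_{[j]},\tilde G^\beta_{[j]}$ are the sets of these elements, $\Gamma_j^{\alpha,\beta}=\langle A_j,\tilde Q^\alpha_{[j]},\tilde G^\beta_{[j]}\rangle$, and $\tilde B^{\alpha,\beta}_j=\tilde Q^\alpha_{[j]}\tilde G^\beta_{[j]}$. Stabilized sections: for $g\in\mathrm{Aut}(\mathcal{T}_j)$ and a vertex $u$, let $\ell_u(g)$ be the length of the orbit of $u$ under $\langle g\rangle$ and $g\Vert_u=g^{\ell_u(g)}|_u$. A pair $(\alpha,\beta)\in\mathcal{S}^2$ is shrinking if $\alpha_j\ne\beta_j$ for all $j$ and for each $\gamma\in\Gamma_1^{\alpha,\beta}$ there is $k\in\mathbb{N}$ such that for every vertex $x$ of level $k$ of $\mathcal{T}_1$, $\gamma\Vert_x$ lies in $\tilde B^{\alpha,\beta}_{k+1}$ or in $A_{k+1}$. *)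

From mathcomp Require Import all_boot all_fingroup.
From mathcomp Require Import boolp.
Set Implicit Arguments.
Unset Strict Implicit.
Unset Printing Implicit Defensive.
Local Open Scope group_scope.

Section RootedTree.
(* The alphabets: X n for n >= 1 (X 0 is never used). *)
Variable X : nat -> finType.

Definition letter := {n : nat & X n}.

(* [vertex j w] : w = x_j x_{j+1} ... x_k is a vertex of the tree T_j
   (its level is size w). *)
Fixpoint vertex (j : nat) (w : seq letter) : bool :=
  match w with
  | [::] => true
  | x :: w' => (tag x == j) && vertex j.+1 w'
  end.

(* Tree maps are represented as functions on words; only their behaviour on
   vertices of the relevant tree matters (see aut_eq). *)
Definition aut_eq (j : nat) (h h' : seq letter -> seq letter) : Prop :=
  forall w, vertex j w -> h w = h' w.

Definition is_aut (j : nat) (h : seq letter -> seq letter) : Prop :=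
  [/\ forall w, vertex j w -> vertex j (h w),
      forall w, vertex j w -> size (h w) = size w,
      forall w n, vertex j w -> h (take n w) = take n (h w),
      forall w w', vertex j w -> vertex j w' -> h w = h w' -> w = w'
    & forall v, vertex j v -> exists2 w, vertex j w & h w = v].

(* Subgroup of Aut(T_j) generated by a set S of automorphisms of T_j:
   all finite products of elements of S and their inverses (up to equality
   on the vertices of T_j). *)
Inductive gen_aut (j : nat) (S : (seq letter -> seq letter) -> Prop) :
    (seq letter -> seq letter) -> Prop :=
  | GA_id : gen_aut j S id
  | GA_mul s h : S s -> gen_aut j S h -> gen_aut j S (s \o h)
  | GA_mulV s s' h : S s -> is_aut j s' -> aut_eq j (s \o s') id ->
      gen_aut j S h -> gen_aut j S (s' \o h)
  | GA_eq h h' : gen_aut j S h -> aut_eq j h h' -> gen_aut j S h'.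

(* Section h|_u : h(uv) = h(u) h|_u(v). *)
Definition sect (h : seq letter -> seq letter) (u : seq letter) :
    seq letter -> seq letter :=
  fun v => drop (size u) (h (u ++ v)).

Definition autpow (h : seq letter -> seq letter) (m : nat) :
    seq letter -> seq letter := fun w => iter m h w.

Definition orbit_len (h : seq letter -> seq letter) (u : seq letter) (n : nat)
    : Prop :=
  [/\ 0 < n, iter n h u = u & forall m, 0 < m < n -> iter m h u <> u].

Definition lett_act (rho : forall n, {perm X n}) (x : letter) : letter :=
  Tagged X (rho (tag x) (tagged x)).

Definition permL (j : nat) (a : {perm X j}) (x : letter) : letter :=
  match tag x =P j with
  | ReflectT e => Tagged X (a (eq_rect (tag x) X (tagged x) j e))
  | ReflectF _ => x
  end.

Definition rooted (j : nat) (a : {perm X j}) (w : seq letter) : seq letter :=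
  if w is x :: w' then permL a x :: w' else w.

(* The element \tilde{r}^delta_{[j]} for a family rho (rho_n = image of r in
   Sym(X_n)) and delta in S: trivial on level 1, section at o is
   \tilde{r}^delta_{[j+1]}, section at delta_j is r_{j+1}, identity elsewhere. *)
Fixpoint tilde (rho : forall n, {perm X n}) (o delta : forall n, X n)
    (j : nat) (w : seq letter) {struct w} : seq letter :=
  match w with
  | [::] => [::]
  | x :: w' =>
      if x == Tagged X (o j) then x :: tilde rho o delta j.+1 w'
      else if x == Tagged X (delta j) then
        x :: (if w' is y :: w'' then lett_act rho y :: w'' else w')
      else x :: w'
  end.

End RootedTree.

Section Setting.
Variables (X : nat -> finType) (Q : finGroupType) (G : groupType).
Variables (qa : forall n, Q -> {perm X n}) (ga : forall n, G -> {perm X n}).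

Definition Qn (n : nat) : {set {perm X n}} := qa n @: [set: Q].
Definition Gn (n : nat) : {set {perm X n}} :=
  [set p | `[< exists g : G, ga n g = p >] ].
Definition An (n : nat) : {set {perm X n}} := <<Qn n :|: Gn n>>.

Inductive gen_grp (S : G -> Prop) : G -> Prop :=
  | GG_one : gen_grp S 1
  | GG_mul s g : S s -> gen_grp S g -> gen_grp S (s * g)
  | GG_mulV s g : S s -> gen_grp S g -> gen_grp S (s^-1 * g).

Definition fin_gen_G : Prop :=
  exists gs : seq G, forall g, gen_grp (fun s => s \in gs) g.

(* The standing assumptions of the setting (for all levels n >= 1):
   |X_n| >= 2; Q and G act on X_n (group homomorphisms into Sym(X_n));
   (A1) G finitely generated (Q is a finite group, hence finitely generated);
   (A2) Q perfect;
   (A3) A_n transitive on X_n and generated by the G_n-conjugates of Q_n. *)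
Definition setting : Prop :=
  (forall n, 0 < n -> 1 < #|X n|) /\
  (forall n, 0 < n -> forall x y : Q, qa n (x * y) = qa n x * qa n y) /\
  (forall n, 0 < n -> forall x y : G, ga n (x * y) = ga n x * ga n y) /\
  fin_gen_G /\
  [~: [set: Q], [set: Q]] = [set: Q] /\
  (forall n, 0 < n -> [transitive An n, on [set: X n] | 'P]) /\
  (forall n, 0 < n -> An n = <<class_support (Qn n) (Gn n)>>).

Variable o : forall n, X n.

Definition inS (alpha : forall n, X n) : Prop := forall n, 0 < n -> alpha n != o n.

Definition Qtil (alpha : forall n, X n) (j : nat) (q : Q) :=
  tilde (fun n => qa n q) o alpha j.
Definition Gtil (beta : forall n, X n) (j : nat) (g : G) :=
  tilde (fun n => ga n g) o beta j.

Definition Gamma1 (alpha beta : forall n, X n) (gamma : seq (letter X) -> seq (letter X)) :=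
  gen_aut 1 (fun s => (exists2 a, a \in An 1 & s = rooted a)
                      \/ (exists q, s = Qtil alpha 1 q)
                      \/ (exists g, s = Gtil beta 1 g)) gamma.

Definition inB (alpha beta : forall n, X n) (j : nat) h :=
  exists q g, aut_eq j h (Qtil alpha j q \o Gtil beta j g).
Definition inA (j : nat) h := exists2 a, a \in An j & aut_eq j h (rooted a).
Definition inGtil (beta : forall n, X n) (j : nat) h :=
  exists g, aut_eq j h (Gtil beta j g).

Definition shrinking (alpha beta : forall n, X n) : Prop :=
  (forall j, 0 < j -> alpha j != beta j) /\
  forall gamma, Gamma1 alpha beta gamma ->
    exists k, 0 < k /\
      forall x n, vertex 1 x -> size x = k -> orbit_len gamma x n ->
        inB alpha beta k.+1 (sect (autpow gamma n) x)
        \/ inA k.+1 (sect (autpow gamma n) x).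

End Setting.

(* Let k be given by the shrinking property of gamma and let v = x u with x of
   level k.  If l is the orbit length of x, then gamma^l fixes x and its section
   h there lies in A_{k+1} or in Q~^alpha G~^beta.  A power h^t with t divisible
   by |Q| and by every |Sym(X_n)|, n <= |v| + 1, kills the A_{k+1}-part and the
   Q~-part (q~ and g~ live on disjoint subtrees, hence commute), while g~^t acts
   trivially on the levels below x down to v, so that h^t fixes u with a section
   in G~^beta.  Taking m = N! t, with N the number of vertices of level k, makes
   this uniform in x: gamma^m = (gamma^l)^(m/l). *)

From mathcomp Require Import all_boot all_fingroup.
From mathcomp Require Import boolp.
From mathcomp Require Import cyclic.
From mathcomp Require Import zify.
Set Implicit Arguments.
Unset Strict Implicit.
Unset Printing Implicit Defensive.
Local Open Scope group_scope.

Section TreeMaps.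
Variable X : nat -> finType.
Local Notation L := (letter X).
Implicit Types (j : nat) (u v w x : seq L) (h : seq L -> seq L).

Lemma vertex_cat j u v : vertex j (u ++ v) = vertex j u && vertex (j + size u) v.
Proof.
elim: u j => [|y u IH] j /=; first by rewrite addn0.
by rewrite IH addSnnS andbA.
Qed.

Lemma vertex_take j n w : vertex j w -> vertex j (take n w).
Proof. by elim: w j n => [|y w IH] j [|n] //= /andP[-> /IH ->]. Qed.

Lemma vertex_consP j (y : L) w : vertex j (y :: w) -> exists z : X j, y = Tagged X z.
Proof. by case: y => n z /andP[/eqP /= e _]; subst; exists z. Qed.

(* [is_aut] without surjectivity, which is all that powers and sections at
   fixed vertices need. *)
Definition tree_inj j h :=
  [/\ forall w, vertex j w -> vertex j (h w),
      forall w, vertex j w -> size (h w) = size w,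
      forall w n, vertex j w -> h (take n w) = take n (h w)
    & forall w w', vertex j w -> vertex j w' -> h w = h w' -> w = w'].

Lemma tree_inj_id j : tree_inj j id.
Proof. by split. Qed.

Lemma tree_inj_comp j f h : tree_inj j f -> tree_inj j h -> tree_inj j (f \o h).
Proof.
case=> fv fs ft fi [hv hs ht hi]; split=> /=.
- by move=> w Hw; apply/fv/hv.
- by move=> w Hw; rewrite fs ?hs //; apply: hv.
- by move=> w n Hw; rewrite ht // ft //; apply: hv.
- by move=> w w' Hw Hw' /fi E; apply: hi => //; apply: E; apply: hv.
Qed.

Lemma tree_inj_aut_eq j h h' : tree_inj j h -> aut_eq j h h' -> tree_inj j h'.
Proof.
case=> hv hs ht hi E; split.
- by move=> w Hw; rewrite -E //; apply: hv.
- by move=> w Hw; rewrite -E //; apply: hs.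
- by move=> w n Hw; rewrite -!E ?ht //; apply: vertex_take.
- by move=> w w' Hw Hw'; rewrite -!E //; apply: hi.
Qed.

Lemma gen_aut_tree_inj j S h :
  (forall s, S s -> tree_inj j s) -> gen_aut j S h -> tree_inj j h.
Proof.
move=> HS; elim=> {h} [|s h Ss _ IH|s s' h _ [sv ss st si _] _ _ IH|h h' _ IH E].
- exact: tree_inj_id.
- exact: tree_inj_comp (HS s Ss) IH.
- exact: tree_inj_comp (And4 sv ss st si) IH.
- exact: tree_inj_aut_eq E.
Qed.

Lemma tree_inj_iter j h r : tree_inj j h -> tree_inj j (iter r h).
Proof.
move=> Hh; elim: r => [|r IH]; first exact: tree_inj_id.
exact: tree_inj_comp Hh IH.
Qed.

Lemma tree_inj_cat j h u v : tree_inj j h -> vertex j u -> vertex (j + size u) v ->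
  h (u ++ v) = h u ++ sect h u v.
Proof.
case=> _ _ ht _ Hu Hv; have Huv : vertex j (u ++ v) by rewrite vertex_cat Hu.
by rewrite /sect -{1}(cat_take_drop (size u) (h (u ++ v))) -ht // take_size_cat.
Qed.

Lemma tree_inj_sect j h u : tree_inj j h -> vertex j u -> h u = u ->
  tree_inj (j + size u) (sect h u).
Proof.
move=> Hh Hu Hfix; have [hv hs ht hi] := Hh.
have Huv v : vertex (j + size u) v -> vertex j (u ++ v) by rewrite vertex_cat Hu.
have hcat v : vertex (j + size u) v -> h (u ++ v) = u ++ sect h u v.
  by move=> Hv; rewrite (tree_inj_cat Hh) ?Hfix.
split.
- by move=> v /[dup] Hv /Huv /hv; rewrite hcat // vertex_cat => /andP[].
- by move=> v /[dup] Hv /Huv /hs; rewrite hcat // !size_cat => /addnI.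
- move=> v n Hv; have take_u : u ++ take n v = take (size u + n) (u ++ v).
    by rewrite take_cat ltnNge leq_addr /= addKn.
  rewrite /sect take_u ht ?Huv // hcat //.
  by rewrite take_cat ltnNge leq_addr /= addKn !drop_size_cat.
- move=> v v' Hv Hv' E; have /hi : h (u ++ v) = h (u ++ v') by rewrite !hcat ?E.
  by move/(_ (Huv _ Hv) (Huv _ Hv'))/eqP; rewrite eqseq_cat // => /andP[_ /eqP].
Qed.

Lemma iter_sect_fix j h u r v : tree_inj j h -> vertex j u -> h u = u ->
  vertex (j + size u) v -> iter r h (u ++ v) = u ++ iter r (sect h u) v.
Proof.
move=> Hh Hu Hfix Hv; have Hs := tree_inj_sect Hh Hu Hfix.
elim: r => [|r IH] //=; rewrite IH (tree_inj_cat Hh) ?Hfix //.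
by have [sv _ _ _] := tree_inj_iter r Hs; apply: sv.
Qed.

Lemma iter_aut_eq j f g r : (forall w, vertex j w -> vertex j (g w)) ->
  aut_eq j f g -> aut_eq j (iter r f) (iter r g).
Proof.
move=> gv E w Hw; suff [] : iter r f w = iter r g w /\ vertex j (iter r g w) by [].
by elim: r => [|r [IH1 IH2]] //=; rewrite IH1 E //; split=> //; apply: gv.
Qed.

Fixpoint level_vertices j k : seq (seq L) :=
  if k is k'.+1 then
    [seq (Tagged X y : L) :: w | y <- enum (X j), w <- level_vertices j.+1 k']
  else [:: [::]].

Lemma mem_level_vertices j w : vertex j w -> w \in level_vertices j (size w).
Proof.
elim: w j => [|y w IH] j; first by rewrite /= inE.
move=> Hv; have [z ->] := vertex_consP Hv; move: Hv => /andP[_ Hw].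
apply: (allpairs_f (fun (z : X j) w => (Tagged X z : L) :: w)); last exact: IH.
by rewrite mem_enum.
Qed.

Lemma iter_periodic j h x : tree_inj j h -> vertex j x ->
  exists2 n, 0 < n <= size (level_vertices j (size x)) & iter n h x = x.
Proof.
move=> Hh Hx; set N := size _.
have Hi i := tree_inj_iter i Hh.
set s := [seq iter i h x | i <- iota 0 N.+1].
have : ~~ uniq s.
  apply/negP => Us; have Hsub : {subset s <= level_vertices j (size x)}.
    move=> _ /mapP[i _ ->]; have [hv hs _ _] := Hi i.
    by rewrite -(hs x Hx); apply/mem_level_vertices/hv.
  by have := uniq_leq_size Us Hsub; rewrite size_map size_iota ltnn.
case/(uniqPn x) => i [i' [lt_ii' lt_i's]]; rewrite size_map size_iota in lt_i's.
have lt_is := ltn_trans lt_ii' lt_i's.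
rewrite !(nth_map 0) ?size_iota ?nth_iota // !add0n.
move=> Eii'; exists (i' - i); first by rewrite subn_gt0 lt_ii' /=; lia.
have [_ _ _ hi] := Hi i; apply: hi => //; first by have [+ _ _ _] := Hi (i' - i); apply.
by rewrite -iterD subnKC ?Eii' // ltnW.
Qed.

Lemma orbit_len_exists j h x : tree_inj j h -> vertex j x ->
  exists l, orbit_len h x l /\ l <= size (level_vertices j (size x)).
Proof.
move=> Hh Hx; have [n /andP[n_gt0 n_le] Hn] := iter_periodic Hh Hx.
have exP : exists n, (0 < n) && (iter n h x == x) by exists n; rewrite n_gt0 Hn eqxx.
case: (ex_minnP exP) => l /andP[l_gt0 /eqP Hl] Hmin.
exists l; split; last by apply: leq_trans (Hmin n _) n_le; rewrite n_gt0 Hn eqxx.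
split=> // m /andP[m_gt0 lt_ml] Hm.
by have := Hmin m; rewrite m_gt0 Hm eqxx leqNgt lt_ml => /(_ isT).
Qed.

End TreeMaps.

Section Tilde.
Variable X : nat -> finType.
Local Notation L := (letter X).
Implicit Types (rho sig : forall n, {perm X n}) (o a b d : forall n, X n).
Implicit Types (j : nat) (u w : seq L).

Definition act_head rho w : seq L := if w is y :: w' then lett_act rho y :: w' else w.

Lemma tilde_cons rho o d j (y : L) w :
  tilde rho o d j (y :: w) = y ::
    (if y == Tagged X (o j) then tilde rho o d j.+1 w
     else if y == Tagged X (d j) then act_head rho w else w).
Proof. by rewrite /=; case: ifP => //; case: ifP. Qed.

Lemma lett_act1 rho (y : L) : rho (tag y) = 1 -> lett_act rho y = y.
Proof. by case: y => n y /= H; rewrite /lett_act /= H perm1. Qed.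

Lemma act_head1 rho n w : vertex n w -> rho n = 1 -> act_head rho w = w.
Proof. by case: w => // y w /andP[/eqP Hy _] H /=; rewrite lett_act1 ?Hy. Qed.

Lemma act_headM rho sig w :
  act_head rho (act_head sig w) = act_head (fun n => sig n * rho n) w.
Proof. by case: w => // y w /=; rewrite /lett_act /= permM. Qed.

Lemma eq_act_head rho sig w :
  (forall n, rho n = sig n) -> act_head rho w = act_head sig w.
Proof. by case: w => // y w H /=; rewrite /lett_act H. Qed.

Lemma act_head_take rho n w : act_head rho (take n w) = take n (act_head rho w).
Proof. by case: w => // y w; case: n. Qed.

Lemma act_head_inj rho n w w' : vertex n w -> vertex n w' ->
  act_head rho w = act_head rho w' -> w = w'.
Proof.
case: w => [|y w]; case: w' => [|y' w'] //= /andP[/eqP Hy _] /andP[/eqP Hy' _] [_ E ->].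
case: y Hy E => m z /= Hm; case: y' Hy' => m' z' /= Hm'; subst.
by move=> E; rewrite (perm_inj (eq_from_Tagged E)).
Qed.

Lemma tilde_tree_inj rho o d j : tree_inj j (tilde rho o d j).
Proof.
split.
- move=> w; elim: w j => // y w IH j /andP[Hy Hw]; rewrite tilde_cons /= Hy /=.
  by case: ifP => _; rewrite ?IH //; case: ifP => _ //; case: w {IH} Hw.
- move=> w _; elim: w j => // y w IH j; rewrite tilde_cons /=.
  by case: ifP => _; rewrite ?IH //; case: ifP => _ //; case: w {IH}.
- move=> w n _; elim: w j n => [|y w IH] j [|n] //; first by rewrite tilde_cons.
  rewrite [take n.+1 _]/= !tilde_cons /=.
  by case: ifP => _; rewrite ?IH //; case: ifP => _ //; rewrite act_head_take.
- move=> w; elim: w j => [|y w IH] j [|y' w'] //; rewrite ?tilde_cons //.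
  move=> /andP[_ Hw] /andP[_ Hw'] [<-]; case: ifP => _; first by move/IH ->.
  by case: ifP => _; [move/(act_head_inj Hw Hw') -> | move->].
Qed.

Lemma eq_tilde rho sig o d j w : vertex j w -> (forall n, j < n -> rho n = sig n) ->
  tilde rho o d j w = tilde sig o d j w.
Proof.
elim: w j => // y w IH j /andP[_ Hw] H; rewrite !tilde_cons.
case: ifP => _; first by rewrite IH // => n Hn; apply: H; lia.
case: ifP => _ //; case: w Hw {IH} => // y' w /andP[/eqP Hy' _] /=.
by rewrite /lett_act H // Hy'.
Qed.

Lemma tilde_cat sig o d j u : vertex j u ->
  (forall n, j < n <= j + size u -> sig n = 1) ->
  (forall w, vertex (j + size u) w ->
     tilde sig o d j (u ++ w) = u ++ tilde sig o d (j + size u) w)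
  \/ (forall w, vertex (j + size u) w -> tilde sig o d j (u ++ w) = u ++ w).
Proof.
elim: u j => [|y u IH] j; first by left => w _; rewrite addn0.
move=> /andP[_ Hu] Hs; rewrite [size _]/= -addSnnS.
case Ho: (y == Tagged X (o j)).
  have Hs' n : j.+1 < n <= j.+1 + size u -> sig n = 1.
    by move=> Hn; apply: Hs; rewrite /=; lia.
  have [H|H] := IH j.+1 Hu Hs'; [left|right] => w Hw;
    by rewrite cat_cons tilde_cons Ho /= H.
case Hd: (y == Tagged X (d j)); right => w Hw; rewrite cat_cons tilde_cons Ho Hd //=.
congr (_ :: _); case: u Hu {IH} Hs Hw => [|y' u] Hu Hs Hw /=.
  by rewrite /= addn0 in Hw; rewrite (act_head1 Hw) //; apply: Hs; rewrite /=; lia.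
by move: Hu => /andP[/eqP Hy' _]; rewrite lett_act1 // Hy'; apply: Hs; rewrite /=; lia.
Qed.

Lemma tilde_id sig o d j w : (forall n, j < n -> sig n = 1) -> vertex j w ->
  tilde sig o d j w = w.
Proof.
move=> H Hw; have Hs n : j < n <= j + size w -> sig n = 1.
  by case/andP=> Hn _; apply: H.
by have [E|E] := tilde_cat o d Hw Hs; move: (E [::] isT); rewrite !cats0 // => ->.
Qed.

(* The product [tilde rho o a j \o tilde sig o b j] when [o], [a], [b] are
   pairwise distinct (tilde_comp_tilde2): the factors act on disjoint subtrees,
   so powers of the product are computed factorwise (iter_tilde2). *)
Fixpoint tilde2 o a b rho sig j w : seq L :=
  match w with
  | [::] => [::]
  | y :: w' =>
      if y == Tagged X (o j) then y :: tilde2 o a b rho sig j.+1 w'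
      else if y == Tagged X (a j) then y :: act_head rho w'
      else if y == Tagged X (b j) then y :: act_head sig w'
      else y :: w'
  end.

Lemma eq_tilde2 o a b rho sig rho' sig' j w :
  (forall n, rho n = rho' n) -> (forall n, sig n = sig' n) ->
  tilde2 o a b rho sig j w = tilde2 o a b rho' sig' j w.
Proof.
move=> Hr Hs; elim: w j => //= y w IH j.
by rewrite IH (eq_act_head _ Hr) (eq_act_head _ Hs).
Qed.

Lemma tilde2M o a b rho sig rho' sig' j w :
  tilde2 o a b rho sig j (tilde2 o a b rho' sig' j w) =
  tilde2 o a b (fun n => rho' n * rho n) (fun n => sig' n * sig n) j w.
Proof.
elim: w j => //= y w IH j.
case: ifP => Ho /=; rewrite ?Ho ?IH //.
case: ifP => Ha /=; rewrite ?Ho ?Ha ?act_headM //.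
by case: ifP => Hb /=; rewrite ?Ho ?Ha ?Hb ?act_headM.
Qed.

Lemma tilde2_1 o a b j w : tilde2 o a b (fun n => 1) (fun n => 1) j w = w.
Proof.
elim: w j => //= y w IH j.
have -> : act_head (fun n => 1) w = w by case: w {IH} => // y' w /=; rewrite lett_act1.
by rewrite IH; case: ifP => //; case: ifP => //; case: ifP.
Qed.

Lemma iter_tilde2 o a b rho sig j t w :
  iter t (tilde2 o a b rho sig j) w =
  tilde2 o a b (fun n => rho n ^+ t) (fun n => sig n ^+ t) j w.
Proof.
elim: t => [|t IH] /=; first by rewrite -{1}(tilde2_1 o a b j w); apply: eq_tilde2.
by rewrite IH tilde2M; apply: eq_tilde2 => n; rewrite expgSr.
Qed.

Lemma tilde_comp_tilde2 o a b rho sig j w :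
  (forall n, j <= n -> [/\ a n != b n, a n != o n & b n != o n]) -> vertex j w ->
  tilde rho o a j (tilde sig o b j w) = tilde2 o a b rho sig j w.
Proof.
elim: w j => // y w IH j Hn Hv; have [z ->] := vertex_consP Hv.
move: Hv => /andP[_ Hw]; have [Hab Hao Hbo] := Hn j (leqnn j).
rewrite [tilde sig o b j _]tilde_cons tilde_cons /= !eq_Tagged /=.
have [->|No] := eqVneq z (o j); first by rewrite IH // => n Hn'; apply: Hn; lia.
have [->|Nb] := eqVneq z (b j); last by case: (z == a j).
by rewrite eq_sym (negbTE Hab).
Qed.

Lemma tilde2_1l o a b rho sig j w : 0 < j -> (forall n, 0 < n -> a n != b n) ->
  (forall n, 0 < n -> rho n = 1) -> vertex j w ->
  tilde2 o a b rho sig j w = tilde sig o b j w.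
Proof.
elim: w j => // y w IH j j_gt0 Hab Hr Hv; have [z Ez] := vertex_consP Hv.
move: Hv => /andP[_ Hw]; rewrite tilde_cons /= !Ez !eq_Tagged /=.
have [_|_] /= := eqVneq z (o j); first by rewrite IH.
have [->|_] /= := eqVneq z (a j); last by case: ifP.
by rewrite (negbTE (Hab j j_gt0)) (act_head1 Hw) //; apply: Hr.
Qed.

Lemma permL_Tagged j (p : {perm X j}) (z : X j) : permL p (Tagged X z) = Tagged X (p z).
Proof. by rewrite /permL /=; case: eqP => // e; rewrite (eq_irrelevance e (erefl j)). Qed.

Lemma rooted_tree_inj j (p : {perm X j}) : tree_inj j (rooted p).
Proof.
split.
- case=> // y w Hv; have [z Ez] := vertex_consP Hv; move: Hv => /andP[_ Hw].
  by rewrite Ez /= permL_Tagged /= eqxx.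
- by case.
- by case=> [|y w] [|n].
- case=> [|y w] [|y' w'] //= Hv Hv'.
  have [z ->] := vertex_consP Hv; have [z' ->] := vertex_consP Hv'.
  by rewrite !permL_Tagged => -[E ->]; rewrite (perm_inj (eq_from_Tagged E)).
Qed.

Lemma iter_rooted j (p : {perm X j}) t w : vertex j w ->
  iter t (rooted p) w = rooted (p ^+ t) w.
Proof.
case: w => [|y w] Hv; first by elim: t => //= t ->.
have [z ->] := vertex_consP Hv.
elim: t => [|t IH] /=; first by rewrite permL_Tagged expg0 perm1.
by rewrite IH /= !permL_Tagged expgSr permM.
Qed.

Lemma rooted1 j w : rooted (1 : {perm X j}) w = w.
Proof.
case: w => // y w /=; rewrite /permL; case: eqP => // e.
by case: y e => n z /= e; subst; rewrite perm1.
Qed.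

End Tilde.

Lemma morph1_of_mul (G H : groupType) (f : G -> H) :
  {morph f : x y / x * y} -> f 1 = 1.
Proof. by move=> fM; apply: (mulgI (f 1)); rewrite -fM !mulg1. Qed.

Lemma morphX_of_mul (G H : groupType) (f : G -> H) x t :
  {morph f : x y / x * y} -> f (x ^+ t) = f x ^+ t.
Proof.
move=> fM; elim: t => [|t IH]; first by rewrite !expg0 morph1_of_mul.
by rewrite !expgS fM IH.
Qed.

Lemma expg_card_dvdn (T : finGroupType) (x : T) t : #|T| %| t -> x ^+ t = 1.
Proof.
by case/dvdnP => c ->; rewrite mulnC expgM -cardsT expg_cardG ?in_setT // expg1n.
Qed.

Definition perm_exponent (X : nat -> finType) K := (\prod_(n < K.+1) #|{perm X n}|)%N.

Lemma perm_exponent_gt0 X K : 0 < perm_exponent X K.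
Proof. by apply: prodn_gt0 => n; apply/card_gt0P; exists 1. Qed.

Lemma dvdn_perm_exponent X n K : n <= K -> #|{perm X n}| %| perm_exponent X K.
Proof.
by rewrite -ltnS => lt_nK; rewrite /perm_exponent (bigD1 (Ordinal lt_nK)) ?dvdn_mulr.
Qed.

Section StabilizedPowers.
Variables (X : nat -> finType) (Q : finGroupType) (G : groupType).
Variables (qa : forall n, Q -> {perm X n}) (ga : forall n, G -> {perm X n}).
Variables (o alpha beta : forall n, X n).
Hypothesis qaM : forall n, 0 < n -> {morph qa n : x y / x * y}.
Hypothesis gaM : forall n, 0 < n -> {morph ga n : x y / x * y}.
Local Notation L := (letter X).
Local Notation Gtil := (Gtil ga o beta).

Definition fix_Gtil_sect j (h : seq L -> seq L) (u : seq L) :=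
  exists g, forall w, vertex (j + size u) w -> h (u ++ w) = u ++ Gtil (j + size u) g w.

Lemma fix_Gtil_sectP j h v : fix_Gtil_sect j h v ->
  h v = v /\ inGtil ga o beta (j + size v) (sect h v).
Proof.
case=> g Hg; split; first by have := Hg [::] isT; rewrite !cats0.
by exists g => w Hw; rewrite /sect Hg // drop_size_cat.
Qed.

Lemma fix_Gtil_sect_iter j h x l t u : tree_inj j h -> vertex j x ->
  iter l h x = x -> vertex (j + size x) u ->
  fix_Gtil_sect (j + size x) (iter t (sect (iter l h) x)) u ->
  fix_Gtil_sect j (iter (t * l) h) (x ++ u).
Proof.
move=> Hh Hx Hfix Hu [g Hg]; exists g => w; rewrite size_cat addnA => Hw.
rewrite iterM -catA (iter_sect_fix _ (tree_inj_iter l Hh) Hx Hfix) ?Hg ?catA //.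
by rewrite vertex_cat Hu.
Qed.

Lemma Gtil1 j w : 0 < j -> vertex j w -> Gtil j 1 w = w.
Proof.
move=> j_gt0; apply: tilde_id => n lt_jn.
by apply: morph1_of_mul; apply: gaM; apply: leq_trans lt_jn.
Qed.

Lemma fix_Gtil_sect_rooted j h (a : {perm X j}) t u : 0 < j ->
  aut_eq j h (rooted a) -> #|{perm X j}| %| t -> vertex j u ->
  fix_Gtil_sect j (iter t h) u.
Proof.
move=> j_gt0 Ha dvd_t Hu; exists 1 => w Hw.
have [av _ _ _] := rooted_tree_inj a.
rewrite (iter_aut_eq t av Ha) ?vertex_cat ?Hu // iter_rooted ?vertex_cat ?Hu //.
by rewrite expg_card_dvdn // rooted1 Gtil1 // addn_gt0 j_gt0.
Qed.

Hypothesis alpha_o : inS o alpha.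
Hypothesis beta_o : inS o beta.
Hypothesis alpha_beta : forall n, 0 < n -> alpha n != beta n.

(* Since [q ^+ t = 1], the power kills the [\tilde Q^alpha]-factor; since the
   [ga n g ^+ t] are trivial on the levels below [u], the [\tilde G^beta]-factor
   has the required section at [u]. *)
Lemma fix_Gtil_sect_Btil j h q g t u : 0 < j ->
  aut_eq j h (Qtil qa o alpha j q \o Gtil j g) ->
  #|Q| %| t -> perm_exponent X (j + size u) %| t -> vertex j u ->
  fix_Gtil_sect j (iter t h) u.
Proof.
move=> j_gt0 Hqg dvd_Q dvd_X Hu.
have distinct n : j <= n -> [/\ alpha n != beta n, alpha n != o n & beta n != o n].
  by move=> le_jn; have n_gt0 := leq_trans j_gt0 le_jn; split; auto.
have Ht2 : aut_eq j h (tilde2 o alpha beta (fun n => qa n q) (fun n => ga n g) j).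
  by move=> w Hw; rewrite Hqg //= /Qtil /Gtil tilde_comp_tilde2.
have t2v w : vertex j w ->
    vertex j (tilde2 o alpha beta (fun n => qa n q) (fun n => ga n g) j w).
  move=> Hw; rewrite -tilde_comp_tilde2 //.
  by have [+ _ _ _] := tree_inj_comp (tilde_tree_inj (fun n => qa n q) o alpha j)
                                     (tilde_tree_inj (fun n => ga n g) o beta j); apply.
have Ht w : vertex j w -> iter t h w = tilde (fun n => ga n g ^+ t) o beta j w.
  move=> Hw; rewrite (iter_aut_eq t t2v Ht2 Hw) iter_tilde2 tilde2_1l // => n n_gt0.
  by rewrite -morphX_of_mul ?expg_card_dvdn ?morph1_of_mul //; apply: qaM.
have Hsig n : j < n <= j + size u -> ga n g ^+ t = 1.
  case/andP=> _ le_n; apply: expg_card_dvdn; apply: dvdn_trans dvd_X.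
  exact: dvdn_perm_exponent.
have Huw w : vertex (j + size u) w -> vertex j (u ++ w) by rewrite vertex_cat Hu.
have [H|H] := tilde_cat o beta Hu Hsig; [exists (g ^+ t) | exists 1] => w Hw;
  rewrite Ht ?Huw // H //; last by rewrite Gtil1 // addn_gt0 j_gt0.
congr (_ ++ _); apply: eq_tilde => // n lt_n.
by rewrite morphX_of_mul //; apply: gaM; apply: leq_ltn_trans lt_n.
Qed.

Lemma Gamma1_tree_inj gamma : Gamma1 qa ga o alpha beta gamma -> tree_inj 1 gamma.
Proof.
apply: gen_aut_tree_inj => s [[a _ ->]|[[q ->]|[g ->]]];
  [exact: rooted_tree_inj | exact: tilde_tree_inj | exact: tilde_tree_inj].
Qed.

(* In the exponent, the factorial is a multiple of every orbit length on level
   [k] (orbit_len_exists), and the second factor kills [Q] and every [Sym(X_n)],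
   [n <= k' + 1]. *)
Lemma shrinking_fix_Gtil_sect gamma k k' v : tree_inj 1 gamma ->
  (forall x l, vertex 1 x -> size x = k -> orbit_len gamma x l ->
     inB qa ga o alpha beta k.+1 (sect (autpow gamma l) x)
     \/ inA qa ga k.+1 (sect (autpow gamma l) x)) ->
  k <= k' -> vertex 1 v -> size v = k' ->
  fix_Gtil_sect 1
    (iter ((size (level_vertices X 1 k))`! * (#|Q| * perm_exponent X k'.+1)) gamma) v.
Proof.
move=> Hgamma Hk le_kk' Hv Hs; set N := size _; set t0 := (#|Q| * _)%N.
rewrite -(cat_take_drop k v) in Hv *; set x := take k v; set u := drop k v.
have Hsx : size x = k by rewrite size_takel // Hs.
have Hsu : (k.+1 + size u = k'.+1)%N by rewrite size_drop Hs; lia.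
move: Hv; rewrite vertex_cat Hsx => /andP[Hx Hu].
have [l [Hl l_le]] := orbit_len_exists Hgamma Hx; rewrite Hsx -/N in l_le.
have [l_gt0 Hfix _] := Hl.
have -> : (N`! * t0 = (N`! %/ l * t0) * l)%N.
  by rewrite mulnAC divnK // dvdn_fact // l_gt0.
apply: fix_Gtil_sect_iter; rewrite ?Hsx //.
have dvd_t n : n <= k'.+1 -> #|{perm X n}| %| (N`! %/ l * t0)%N.
  by move=> le_n; rewrite dvdn_mull // dvdn_mull // dvdn_perm_exponent.
case: (Hk x l Hx Hsx Hl) => [[q [g Hqg]]|[a _ Ha]].
- apply: fix_Gtil_sect_Btil Hqg _ _ Hu => //; first by rewrite dvdn_mull // dvdn_mulr.
  by rewrite Hsu dvdn_mull // dvdn_mull.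
- by apply: fix_Gtil_sect_rooted Ha _ Hu => //; apply: dvd_t; lia.
Qed.

End StabilizedPowers.

Theorem lemma2p4 (X : nat -> finType) (Q : finGroupType) (G : groupType)
    (qa : forall n, Q -> {perm X n}) (ga : forall n, G -> {perm X n})
    (o alpha beta : forall n, X n) :
  setting qa ga ->
  inS o alpha -> inS o beta ->
  shrinking qa ga o alpha beta ->
  forall gamma, Gamma1 qa ga o alpha beta gamma ->
  exists K, forall k, K <= k ->
    exists m, 0 < m /\
      (forall v, vertex 1 v -> size v = k -> autpow gamma m v = v) /\
      (forall v, vertex 1 v -> size v = k ->
         inGtil ga o beta k.+1 (sect (autpow gamma m) v)).
Proof.
move=> [_ [qaM [gaM _]]] alpha_o beta_o [alpha_beta shrink] gamma Hgamma.
have gamma_inj := Gamma1_tree_inj Hgamma.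
have [k [_ Hk]] := shrink gamma Hgamma.
exists k => k' le_kk'.
set m := ((size (level_vertices X 1 k))`! * (#|Q| * perm_exponent X k'.+1))%N.
exists m; split.
  by rewrite !muln_gt0 fact_gt0 perm_exponent_gt0 andbT; apply/card_gt0P; exists 1.
have Hm v : vertex 1 v -> size v = k' ->
    autpow gamma m v = v /\ inGtil ga o beta k'.+1 (sect (autpow gamma m) v).
  move=> Hv Hs; rewrite -Hs.
  exact: fix_Gtil_sectP (shrinking_fix_Gtil_sect qaM gaM alpha_o beta_o alpha_beta
                           gamma_inj Hk le_kk' Hv Hs).
by split=> v Hv Hs; have [] := Hm v Hv Hs.
Qed.
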